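(* Let $p\ge5$ be a prime. Then \[ \sum_{j=0}^{p-3}B_j\equiv-1\pmod p . \]
   Context: $B_j$ is the $j$th Bernoulli number ($\frac{t}{e^t-1}=\sum_{m\ge0}B_m\frac{t^m}{m!}$). For rationals whose denominators are coprime to $p$, $a\equiv b\pmod p$ means $a-b$ is $p$ times a rational with denominator coprime to $p$. *)

From mathcomp Require Import all_boot all_order all_algebra.
Set Implicit Arguments. Unset Strict Implicit. Unset Printing Implicit Defensive.
Import Order.TTheory GRing.Theory Num.Theory.
Local Open Scope ring_scope.

(* Bernoulli numbers with t/(e^t-1) convention (B_1 = -1/2), defined by the
   recurrence equivalent to the coefficientwise generating-function identity
   sum_{k=0}^{m} binom(m+1,k) B_k = [m = 0]:
   B_0 = 1,  B_m = -1/(m+1) * sum_{k<m} binom(m+1,k) B_k. *)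
Fixpoint bernoulli_seq (n : nat) : seq rat :=
  match n with
  | 0 => [:: 1]
  | n'.+1 =>
      let s := bernoulli_seq n' in
      rcons s (- (n'.+2)%:R^-1 * \sum_(k < n'.+1) ('C(n'.+2, k))%:R * nth 0 s k)
  end.

Definition bernoulli (n : nat) : rat := nth 0 (bernoulli_seq n) n.

Definition ratcong (p : nat) (a b : rat) : Prop :=
  exists r : rat, a - b = p%:R * r /\ coprime `|denq r|%N p.

From mathcomp Require Import all_boot all_order all_algebra.
From mathcomp Require Import ring lra zify.
Set Implicit Arguments.
Unset Strict Implicit.
Unset Printing Implicit Defensive.
Import Order.TTheory GRing.Theory Num.Theory.
Local Open Scope ring_scope.

(* Since p - 2 is odd and at least 3, B_(p-2) = 0, so the defining recurrence at
   index p - 1 reads sum_(k < p-2) C(p-1, k) B_k = 0.  The B_k with k <= p - 2 have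
   denominators prime to p, because the recurrence only divides by k + 1 < p, and
   C(p-1, k) = (-1)^k (mod p); hence sum_(k < p-2) (-1)^k B_k = 0 (mod p).  Finally
   (-1)^k B_k = B_k + [k = 1]: both sides solve the triangular system
   sum_(k <= n) C(n+1, k) y_k = n + 1, for the left side by binomial inversion of
   sum_(j <= k) C(k, j) B_j = B_k + [k = 1]. *)

Lemma mul_bin_bin n k j : (j <= k)%N -> (k <= n)%N ->
  ('C(n, k) * 'C(k, j) = 'C(n, j) * 'C(n - j, k - j))%N.
Proof.
move=> le_jk le_kn; have le_jn := leq_trans le_jk le_kn.
have le_kj_nj : (k - j <= n - j)%N by exact: leq_sub2r.
have := bin_fact le_kj_nj; rewrite (_ : n - j - (k - j) = n - k)%N; last by lia.
move=> fact_nj.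
have lhs : ('C(n, k) * 'C(k, j) * (j`! * (k - j)`! * (n - k)`!) = n`!)%N.
  by rewrite -(bin_fact le_kn) -(bin_fact le_jk); ring.
have rhs : ('C(n, j) * 'C(n - j, k - j) * (j`! * (k - j)`! * (n - k)`!) = n`!)%N.
  by rewrite -(bin_fact le_jn) -fact_nj; ring.
apply/eqP; rewrite -(eqn_pmul2r (_ : 0 < j`! * (k - j)`! * (n - k)`!)%N).
  by rewrite lhs rhs.
by rewrite !muln_gt0 !fact_gt0.
Qed.

Section BinomialInversion.
Variable R : comPzRingType.

Lemma sum_sign_mul_bin_bin n j : (j <= n)%N ->
  \sum_(k < n.+1) (-1) ^+ k * 'C(n, k)%:R * 'C(k, j)%:R = (-1) ^+ n * (j == n)%:R :> R.
Proof.
(* Writing k = j + i, the k-th term is (-1)^j C(n, j) * (-1)^i C(n - j, i), and the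
   sum over i is (1 - 1)^(n - j). *)
move=> le_jn.
rewrite -(big_mkord xpredT (fun k => (-1) ^+ k * 'C(n, k)%:R * 'C(k, j)%:R)).
rewrite (big_cat_nat (leq0n j)) /=; last by apply: leq_trans le_jn _.
rewrite big_nat_cond big1 ?add0r; last first.
  by move=> k /andP[/andP[_ lt_kj] _]; rewrite (bin_small lt_kj) mulr0n mulr0.
rewrite -{1}(add0n j) big_addn (_ : n.+1 - j = (n - j).+1)%N; last by lia.
under eq_big_nat => i /andP[_ lt_i].
  rewrite -mulrA -natrM mul_bin_bin ?leq_addl //; last by lia.
  rewrite addnK natrM exprD.
  have -> : (-1) ^+ i * (-1) ^+ j * ('C(n, j)%:R * 'C(n - j, i)%:R)
    = 'C(n, j)%:R * (-1) ^+ j * ('C(n - j, i)%:R * (-1) ^+ i) :> R by ring.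
over.
rewrite -big_distrr big_mkord /=.
have := exprDn (1 : R) (-1) (n - j); rewrite addrN expr0n => binom.
under eq_bigr => i _ do rewrite mulr_natl -[(-1) ^+ i]mul1r -[X in X * _](expr1n R (n - j - i)).
rewrite -binom; case: (eqVneq j n) => [->|ne_jn].
  by rewrite subnn binn mul1r.
by rewrite subn_eq0 leqNgt ltn_neqAle ne_jn le_jn !mulr0.
Qed.

Lemma binomial_inversion (x : nat -> R) n :
  \sum_(k < n.+1) (-1) ^+ k * 'C(n, k)%:R * \sum_(j < k.+1) 'C(k, j)%:R * x j
  = (-1) ^+ n * x n.
Proof.
have widen (k : 'I_n.+1) :
    \sum_(j < k.+1) 'C(k, j)%:R * x j = \sum_(j < n.+1) 'C(k, j)%:R * x j.
  rewrite (big_ord_widen n.+1 (fun j => 'C(k, j)%:R * x j) (ltn_ord k)) big_mkcond.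
  by apply: eq_bigr => j _; case: ltnP => // lt_kj; rewrite bin_small // mul0r.
have inner (j : 'I_n.+1) :
    \sum_(k < n.+1) (-1) ^+ k * 'C(n, k)%:R * ('C(k, j)%:R * x j)
    = (-1) ^+ n * (j == n :> nat)%:R * x j.
  rewrite -sum_sign_mul_bin_bin; last by rewrite -ltnS.
  rewrite big_distrl.
  by apply: eq_bigr => k _; rewrite mulrA.
under eq_bigr => k _ do rewrite widen big_distrr.
rewrite exchange_big (eq_bigr _ (fun j _ => inner j)) (bigD1 ord_max) //= eqxx mulr1.
by rewrite big1 ?addr0 // => j /negbTE ne_jn; rewrite -[_ == n]/(j == ord_max) ne_jn mulr0 mul0r.
Qed.

End BinomialInversion.

Lemma sum_mul_delta (R : pzSemiRingType) m (F : nat -> R) i : (i < m)%N ->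
  \sum_(k < m) F k * (k == i :> nat)%:R = F i.
Proof.
move=> lt_im; rewrite (bigD1 (Ordinal lt_im)) //= eqxx mulr1.
by rewrite big1 ?addr0 // => k /negbTE ne_ki; rewrite -[_ == i]/(k == Ordinal lt_im) ne_ki mulr0.
Qed.

Lemma binomial_transform_inj (R : numDomainType) (F G : nat -> R) :
  (forall n, \sum_(k < n.+1) 'C(n.+1, k)%:R * F k = \sum_(k < n.+1) 'C(n.+1, k)%:R * G k) ->
  F =1 G.
Proof.
move=> eqFG; elim/ltn_ind => n IH; have := eqFG n.
rewrite !big_ord_recr /=; under eq_bigr => k _ do rewrite IH //.
by move/addrI; rewrite binSn => /mulfI; apply; rewrite pnatr_eq0.
Qed.

Lemma size_bernoulli_seq n : size (bernoulli_seq n) = n.+1.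
Proof. by elim: n => //= n IH; rewrite size_rcons IH. Qed.

Lemma nth_bernoulli_seq n k : (k <= n)%N -> nth 0 (bernoulli_seq n) k = bernoulli k.
Proof.
elim: n => [|n IH]; first by rewrite leqn0 => /eqP ->.
rewrite leq_eqVlt => /predU1P[-> //|lt_kn].
by rewrite /= nth_rcons size_bernoulli_seq lt_kn IH.
Qed.

Lemma bernoulliS n :
  bernoulli n.+1 = - n.+2%:R^-1 * \sum_(k < n.+1) 'C(n.+2, k)%:R * bernoulli k.
Proof.
rewrite {1}/bernoulli /= nth_rcons size_bernoulli_seq ltnn eqxx.
by congr (_ * _); apply: eq_bigr => k _; rewrite nth_bernoulli_seq // -ltnS.
Qed.

Lemma sum_bin_bernoulli n : \sum_(k < n) 'C(n, k)%:R * bernoulli k = (n == 1)%:R.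
Proof.
case: n => [|[|n]]; rewrite ?big_ord0 ?big_ord1 ?mul1r //.
rewrite big_ord_recr /= bernoulliS binSn mulrA mulrN mulfV ?pnatr_eq0 //.
by rewrite mulN1r addrN.
Qed.

Lemma sum_bin_bernoulli_le n :
  \sum_(k < n.+1) 'C(n, k)%:R * bernoulli k = bernoulli n + (n == 1)%:R.
Proof. by rewrite big_ord_recr /= sum_bin_bernoulli binn mul1r addrC. Qed.

Lemma sum_bin_sign_bernoulli n : (0 < n)%N ->
  \sum_(k < n) 'C(n, k)%:R * ((-1) ^+ k * bernoulli k) = n%:R.
Proof.
move=> n_gt0; have := binomial_inversion bernoulli n.
under eq_bigr => k _ do rewrite sum_bin_bernoulli_le mulrDr.
rewrite big_split /= (sum_mul_delta (fun k => (-1) ^+ k * 'C(n, k)%:R)) ?ltnS //.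
rewrite bin1 expr1 big_ord_recr /= binn mulr1 mulN1r.
under eq_bigr do rewrite -mulrA mulrCA.
by move=> ?; lra.
Qed.

Lemma sign_bernoulli n : (-1) ^+ n * bernoulli n = bernoulli n + (n == 1)%:R.
Proof.
move: n; apply: (@binomial_transform_inj _ (fun n => (-1) ^+ n * bernoulli n)
  (fun n => bernoulli n + (n == 1)%:R)) => n.
rewrite sum_bin_sign_bernoulli //.
under eq_bigr do rewrite mulrDr.
rewrite big_split /= sum_bin_bernoulli.
case: n => [|n]; first by rewrite big_ord1 addr0.
by rewrite (sum_mul_delta (fun k => 'C(n.+2, k)%:R)) // bin1 add0r.
Qed.

Lemma bernoulli_odd n : odd n -> n != 1%N -> bernoulli n = 0.
Proof.
move=> odd_n /negbTE ne_n1; have := sign_bernoulli n.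
by rewrite -signr_odd odd_n expr1 ne_n1 addr0 => ?; lra.
Qed.

Definition p_integral (p : nat) (r : rat) :=
  exists (z : int) (d : nat), coprime d p /\ r = z%:~R / d%:R.

Section PIntegral.
Variable p : nat.
Hypothesis p_gt1 : (1 < p)%N.

Lemma coprime_natr_neq0 d : coprime d p -> d%:R != 0 :> rat.
Proof.
rewrite pnatr_eq0; apply: contraTneq => ->.
by rewrite /coprime gcd0n neq_ltn p_gt1 orbT.
Qed.

Lemma p_integral_int (z : int) : p_integral p z%:~R.
Proof. by exists z, 1%N; rewrite coprime1n divr1. Qed.

Lemma p_integral_nat (n : nat) : p_integral p n%:R.
Proof. exact: p_integral_int n. Qed.

Lemma p_integral_inv_nat n : coprime n p -> p_integral p n%:R^-1.
Proof. by exists 1, n; rewrite mul1r. Qed.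

Lemma p_integralN a : p_integral p a -> p_integral p (- a).
Proof. by move=> [z [d [cop_dp ->]]]; exists (- z), d; rewrite rmorphN mulNr. Qed.

Lemma p_integralD a b : p_integral p a -> p_integral p b -> p_integral p (a + b).
Proof.
move=> [z1 [d1 [cop1 ->]]] [z2 [d2 [cop2 ->]]].
exists (z1 * d2%:Z + z2 * d1%:Z), (d1 * d2)%N; split; first by rewrite coprimeMl cop1 cop2.
have := coprime_natr_neq0 cop1; have := coprime_natr_neq0 cop2.
by rewrite natrM rmorphD !rmorphM /= => ? ?; field; apply/andP.
Qed.

Lemma p_integralM a b : p_integral p a -> p_integral p b -> p_integral p (a * b).
Proof.
move=> [z1 [d1 [cop1 ->]]] [z2 [d2 [cop2 ->]]].
exists (z1 * z2), (d1 * d2)%N; split; first by rewrite coprimeMl cop1 cop2.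
have := coprime_natr_neq0 cop1; have := coprime_natr_neq0 cop2.
by rewrite natrM rmorphM /= => ? ?; field; apply/andP.
Qed.

Lemma p_integral_sum m (F : 'I_m -> rat) :
  (forall i, p_integral p (F i)) -> p_integral p (\sum_(i < m) F i).
Proof.
by move=> F_int; apply: big_ind => //; [exact: p_integral_nat 0 | exact: p_integralD].
Qed.

Lemma p_integral_coprime_denq r : p_integral p r -> coprime `|denq r| p.
Proof.
move=> [z [d [cop_dp def_r]]].
have : (numq r * d%:Z = z * denq r)%R.
  apply: (@intr_inj rat); rewrite !rmorphM /= numqE def_r.
  by field; apply: coprime_natr_neq0.
move/(congr1 absz); rewrite !abszM /= => eq_abs.
have : (`|denq r| %| `|numq r| * d)%N by rewrite eq_abs dvdn_mull.
rewrite Gauss_dvdr => [dvd_den_d|]; last by rewrite coprime_sym coprime_num_den.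
exact: coprime_dvdl dvd_den_d cop_dp.
Qed.

End PIntegral.

Lemma dvdz_bin_pred_prime_sign p k : prime p -> (k < p)%N ->
  (p%:Z %| 'C(p.-1, k)%:Z - (-1) ^+ k)%Z.
Proof.
move=> p_pr; elim: k => [_|k IH lt_kp]; first by rewrite bin0 subrr dvdz0.
have p_gt0 := prime_gt0 p_pr.
have -> : 'C(p.-1, k.+1)%:Z - (-1) ^+ k.+1
    = 'C(p, k.+1)%:Z - ('C(p.-1, k)%:Z - (-1) ^+ k).
  by rewrite -[in RHS](prednK p_gt0) binS /= PoszD exprS; ring.
by rewrite rpredB ?(IH (ltnW lt_kp)) // dvdzE /= prime_dvd_bin.
Qed.

Lemma bernoulli_p_integral p k : prime p -> (k.+2 <= p)%N -> p_integral p (bernoulli k).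
Proof.
move=> p_pr; have p_gt1 := prime_gt1 p_pr.
elim/ltn_ind: k => -[_ _|k IH le_kp]; first exact: (p_integral_nat p 1).
rewrite bernoulliS; apply: (p_integralM p_gt1).
  apply: p_integralN; apply: p_integral_inv_nat.
  by rewrite coprime_sym prime_coprime // gtnNdvd.
apply: (p_integral_sum p_gt1) => i; apply: (p_integralM p_gt1); first exact: p_integral_nat.
by apply: IH => //; apply: leq_trans le_kp; rewrite !ltnS ltnW.
Qed.

Lemma sum_bin_pred_prime_sign_cong p m (x : nat -> rat) :
  prime p -> (m <= p)%N -> (forall k, (k < m)%N -> p_integral p (x k)) ->
  exists2 r, p_integral p r & \sum_(k < m) ('C(p.-1, k)%:R - (-1) ^+ k) * x k = p%:R * r.
Proof.
move=> p_pr le_mp x_int; have p_gt1 := prime_gt1 p_pr.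
pose q k := (('C(p.-1, k)%:Z - (-1) ^+ k) %/ p)%Z.
exists (\sum_(k < m) (q k)%:~R * x k).
  apply: (p_integral_sum p_gt1) => k; apply: (p_integralM p_gt1).
    exact: p_integral_int.
  exact: x_int.
rewrite big_distrr; apply: eq_bigr => k _ /=; rewrite mulrA; congr (_ * _).
have := divzK (dvdz_bin_pred_prime_sign p_pr (leq_trans (ltn_ord k) le_mp)).
move/(congr1 (intr : int -> rat)); rewrite rmorphM rmorphB rmorphXn rmorphN1 /= => <-.
by rewrite mulrC.
Qed.

Theorem corollary4 (p : nat) (hp : prime p) (hp5 : (5 <= p)%N) :
  ratcong p (\sum_(0 <= j < p - 2) bernoulli j) (-1).
Proof.
have [m def_p] : exists m, p = m.+2 by exists (p - 2)%N; lia.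
subst p; rewrite subn2 big_mkord /=.
have odd_m : odd m by case: (even_prime hp) => [/eqP|]; [lia | rewrite /= negbK].
have Bm0 : bernoulli m = 0 by apply: bernoulli_odd odd_m _; lia.
have sum_bin : \sum_(k < m) 'C(m.+1, k)%:R * bernoulli k = 0.
  have := sum_bin_bernoulli m.+1; rewrite big_ord_recr /= Bm0 mulr0 addr0 => ->.
  by rewrite eqSS (_ : (m == 0) = false) //; lia.
have sum_sign : \sum_(k < m) (-1) ^+ k * bernoulli k = \sum_(k < m) bernoulli k + 1.
  under eq_bigr do rewrite sign_bernoulli -[(_ == 1)%:R]mul1r.
  by rewrite big_split (sum_mul_delta (fun=> 1)) //=; lia.
have [r r_int er] := sum_bin_pred_prime_sign_cong hp (leqW (leqnSn m))
  (fun k lt_km => bernoulli_p_integral hp (ltnW lt_km : k.+2 <= m.+2)%N).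
exists (- r); split; last exact/(p_integral_coprime_denq (prime_gt1 hp))/p_integralN.
rewrite mulrN -er /= (eq_bigr _ (fun k _ => mulrBl _ _ _)).
by rewrite sumrB sum_bin sum_sign sub0r !opprK.
Qed.
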